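(* Let $(S_H,\rho_{S_H})$ be the unit sphere of a real Hilbert space $H$ with spherical metric $\rho_{S_H}(x,y)=\arccos\langle x,y\rangle$. Let $r,\delta$ be real numbers with $\pi/8<r<\pi/4$, $0<\delta<1$ and $\cos(\pi/8)\le\cos^2(\delta\pi/8)$. Let $p\in S_H$, $A=\{p\}$, $B=S_{\delta\pi/8}[p]$, $C=S_{\pi/8}[p]$, $X=S_r[p]$ (with metric $d$ the restriction of $\rho_{S_H}$), and let $P_A,P_B$ be the metric projections of $X$ onto $A$ and $B$. Define $T\colon X\to X$ by $Tx=P_Ax$ if $x\in C$ and $Tx=P_Bx$ if $x\in X\setminus C$. Then $X$ is an admissible complete CAT(1) space and $T$ is a spherically nonspreading mapping of $X$ into itself, i.e. $\cos^2 d(Tx,Ty)\ge \cos d(Tx,y)\cos d(Ty,x)$ for all $x,y\in X$.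
   Context: $S_\rho[q]$ denotes the closed ball of radius $\rho$ centered at $q$ in $(S_H,\rho_{S_H})$. The metric projection $P_K$ of $X$ onto a nonempty closed convex set $K\subset X$ sends $x$ to the unique nearest point of $K$ to $x$. A CAT(1) space is a $\pi$-geodesic metric space whose geodesic triangles of perimeter $<2\pi$ satisfy the CAT(1) comparison inequality with respect to comparison triangles in the unit 2-sphere; it is admissible if $d(v,v')<\pi/2$ for all $v,v'$. *)

From Stdlib Require Import Reals Lra.
Open Scope R_scope.

Definition is_real_vector_space {V : Type} (zero : V) (add : V -> V -> V)
  (opp : V -> V) (scal : R -> V -> V) : Prop :=
  (forall x y z, add x (add y z) = add (add x y) z) /\
  (forall x y, add x y = add y x) /\
  (forall x, add x zero = x) /\
  (forall x, add x (opp x) = zero) /\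
  (forall a b x, scal a (scal b x) = scal (a * b) x) /\
  (forall x, scal 1 x = x) /\
  (forall a x y, scal a (add x y) = add (scal a x) (scal a y)) /\
  (forall a b x, scal (a + b) x = add (scal a x) (scal b x)).

Definition is_inner_product {V : Type} (zero : V) (add : V -> V -> V)
  (scal : R -> V -> V) (inner : V -> V -> R) : Prop :=
  (forall x y, inner x y = inner y x) /\
  (forall x y z, inner (add x y) z = inner x z + inner y z) /\
  (forall a x y, inner (scal a x) y = a * inner x y) /\
  (forall x, 0 <= inner x x) /\
  (forall x, inner x x = 0 -> x = zero).

Definition hnorm_dist {V : Type} (add : V -> V -> V) (opp : V -> V)
  (inner : V -> V -> R) (x y : V) : R :=
  sqrt (inner (add x (opp y)) (add x (opp y))).

Definition is_real_hilbert_space {V : Type} (zero : V) (add : V -> V -> V)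
  (opp : V -> V) (scal : R -> V -> V) (inner : V -> V -> R) : Prop :=
  is_real_vector_space zero add opp scal /\
  is_inner_product zero add scal inner /\
  (forall u : nat -> V,
     (forall eps, eps > 0 -> exists N, forall m n, (m >= N)%nat -> (n >= N)%nat ->
        hnorm_dist add opp inner (u m) (u n) < eps) ->
     exists l, forall eps, eps > 0 -> exists N, forall n, (n >= N)%nat ->
        hnorm_dist add opp inner (u n) l < eps).

Definition unit_sphere {V : Type} (inner : V -> V -> R) (x : V) : Prop :=
  inner x x = 1.

Definition sph_dist {V : Type} (inner : V -> V -> R) (x y : V) : R :=
  acos (inner x y).

Definition sph_ball {V : Type} (inner : V -> V -> R) (q : V) (rho : R) (x : V) : Prop :=
  unit_sphere inner x /\ sph_dist inner q x <= rho.

Definition is_metric_on {M : Type} (X : M -> Prop) (d : M -> M -> R) : Prop :=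
  (forall x y, X x -> X y -> 0 <= d x y) /\
  (forall x y, X x -> X y -> d x y = 0 <-> x = y) /\
  (forall x y, X x -> X y -> d x y = d y x) /\
  (forall x y z, X x -> X y -> X z -> d x z <= d x y + d y z).

Definition is_geodesic {M : Type} (X : M -> Prop) (d : M -> M -> R)
  (x y : M) (gamma : R -> M) : Prop :=
  gamma 0 = x /\ gamma (d x y) = y /\
  (forall t, 0 <= t <= d x y -> X (gamma t)) /\
  (forall s t, 0 <= s <= d x y -> 0 <= t <= d x y ->
     d (gamma s) (gamma t) = Rabs (s - t)).

Definition pi_geodesic {M : Type} (X : M -> Prop) (d : M -> M -> R) : Prop :=
  forall x y, X x -> X y -> d x y < PI -> exists gamma, is_geodesic X d x y gamma.

Definition R3 := (R * R * R)%type.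
Definition dot3 (u v : R3) : R :=
  let '(u1, u2, u3) := u in let '(v1, v2, v3) := v in u1 * v1 + u2 * v2 + u3 * v3.
Definition S2 (u : R3) : Prop := dot3 u u = 1.
Definition dS2 (u v : R3) : R := acos (dot3 u v).

(** A point on the side gij at parameter s has as
    comparison point the point p' of S^2 with dS2 yi p' = s and
    dS2 p' yj = d xi xj - s (unique since the side has length < pi). *)

Definition cmp_point (yi yj p' : R3) (s len : R) : Prop :=
  S2 p' /\ dS2 yi p' = s /\ dS2 p' yj = len - s.

Definition on_side {M : Type} (d : M -> M -> R) (xi xj : M) (g : R -> M)
  (yi yj : R3) (p : M) (p' : R3) : Prop :=
  exists s, 0 <= s <= d xi xj /\ p = g s /\ cmp_point yi yj p' s (d xi xj).

Definition on_triangle {M : Type} (d : M -> M -> R) (x1 x2 x3 : M)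
  (g12 g23 g31 : R -> M) (y1 y2 y3 : R3) (p : M) (p' : R3) : Prop :=
  on_side d x1 x2 g12 y1 y2 p p' \/
  on_side d x2 x3 g23 y2 y3 p p' \/
  on_side d x3 x1 g31 y3 y1 p p'.

Definition CAT1_inequality {M : Type} (X : M -> Prop) (d : M -> M -> R) : Prop :=
  forall (x1 x2 x3 : M) (g12 g23 g31 : R -> M) (y1 y2 y3 : R3),
    X x1 -> X x2 -> X x3 ->
    is_geodesic X d x1 x2 g12 -> is_geodesic X d x2 x3 g23 ->
    is_geodesic X d x3 x1 g31 ->
    d x1 x2 + d x2 x3 + d x3 x1 < 2 * PI ->
    S2 y1 -> S2 y2 -> S2 y3 ->
    dS2 y1 y2 = d x1 x2 -> dS2 y2 y3 = d x2 x3 -> dS2 y3 y1 = d x3 x1 ->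
    forall p q p' q',
      on_triangle d x1 x2 x3 g12 g23 g31 y1 y2 y3 p p' ->
      on_triangle d x1 x2 x3 g12 g23 g31 y1 y2 y3 q q' ->
      d p q <= dS2 p' q'.

Definition is_CAT1_space {M : Type} (X : M -> Prop) (d : M -> M -> R) : Prop :=
  is_metric_on X d /\ pi_geodesic X d /\ CAT1_inequality X d.

Definition admissible {M : Type} (X : M -> Prop) (d : M -> M -> R) : Prop :=
  forall v v', X v -> X v' -> d v v' < PI / 2.

Definition complete_metric {M : Type} (X : M -> Prop) (d : M -> M -> R) : Prop :=
  forall u : nat -> M, (forall n, X (u n)) ->
    (forall eps, eps > 0 -> exists N, forall m n, (m >= N)%nat -> (n >= N)%nat ->
        d (u m) (u n) < eps) ->
    exists l, X l /\ forall eps, eps > 0 -> exists N, forall n, (n >= N)%nat ->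
        d (u n) l < eps.

Definition is_metric_projection {M : Type} (X K : M -> Prop) (d : M -> M -> R)
  (P : M -> M) : Prop :=
  forall x, X x -> K (P x) /\ forall k, K k -> d x (P x) <= d x k.

Definition spherically_nonspreading {M : Type} (X : M -> Prop) (d : M -> M -> R)
  (T : M -> M) : Prop :=
  forall x y, X x -> X y ->
    (cos (d (T x) (T y)))^2 >= cos (d (T x) y) * cos (d (T y) x).

From Stdlib Require Import Reals Lra Psatz Classical.
Open Scope R_scope.

(* X = S_r[p] lies in an open hemisphere, so any two of its points are joined by the
   great-circle arc t |-> (sin (L - t) x + sin t y) / sin L, which stays in X. A geodesic
   triangle in X spans at most three dimensions with the Gram matrix of its comparison
   triangle, so the CAT(1) inequality holds with equality; completeness is inherited from H
   because the chord and arc metrics are equivalent on the sphere.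
   T collapses C to p and moves every other x along the arc from p to distance
   rho = delta pi / 8. If only y is outside C, the inequality reduces to
   <p, y> < cos (pi / 8) <= cos^2 rho. If both are outside, the spherical law of cosines
   at p writes the three cosines as g (D) = cos rho cos D + sin rho sin D c, for
   D = rho, d (p, x), d (p, y), and g is positive and decreasing on [rho, pi / 2 - rho]. *)

Record InnerSpace := {
  carrier :> Type;
  vzero : carrier;
  vadd : carrier -> carrier -> carrier;
  vopp : carrier -> carrier;
  vscal : R -> carrier -> carrier;
  ip : carrier -> carrier -> R;
  vector_space_axioms : is_real_vector_space vzero vadd vopp vscal;
  inner_product_axioms : is_inner_product vzero vadd vscal ip }.

Arguments vzero {i}. Arguments vadd {i} _ _. Arguments vopp {i} _.
Arguments vscal {i} _ _. Arguments ip {i} _ _.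

Definition lincomb {E : InnerSpace} (a : R) (x : E) (b : R) (y : E) : E :=
  vadd (vscal a x) (vscal b y).

Section InnerSpaceAlgebra.

Variable E : InnerSpace.
Implicit Types u v w x y z : E.
Local Notation unit_vec := (unit_sphere (@ip E)).

Lemma ip_sym x y : ip x y = ip y x.
Proof. apply (inner_product_axioms E). Qed.

Lemma ip_addl x y z : ip (vadd x y) z = ip x z + ip y z.
Proof. apply (inner_product_axioms E). Qed.

Lemma ip_scall a x y : ip (vscal a x) y = a * ip x y.
Proof. apply (inner_product_axioms E). Qed.

Lemma ip_self_ge0 x : 0 <= ip x x.
Proof. apply (inner_product_axioms E). Qed.

Lemma ip_self_eq0 x : ip x x = 0 -> x = vzero.
Proof. apply (inner_product_axioms E). Qed.

Lemma vaddA x y z : vadd x (vadd y z) = vadd (vadd x y) z.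
Proof. apply (vector_space_axioms E). Qed.

Lemma vaddC x y : vadd x y = vadd y x.
Proof. apply (vector_space_axioms E). Qed.

Lemma vadd0 x : vadd x vzero = x.
Proof. apply (vector_space_axioms E). Qed.

Lemma vaddN x : vadd x (vopp x) = vzero.
Proof. apply (vector_space_axioms E). Qed.

Lemma vscal1 x : vscal 1 x = x.
Proof. apply (vector_space_axioms E). Qed.

Lemma vscalDl a b x : vscal (a + b) x = vadd (vscal a x) (vscal b x).
Proof. apply (vector_space_axioms E). Qed.

Lemma vscal0 x : vscal 0 x = vzero.
Proof.
  set (w := vscal 0 x).
  assert (Hw : vadd w w = w) by (unfold w; rewrite <- vscalDl, Rplus_0_r; reflexivity).
  rewrite <- (vaddN w). rewrite <- Hw at 2.
  rewrite <- vaddA, vaddN, vadd0. reflexivity.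
Qed.

Lemma vscalN1 x : vscal (-1) x = vopp x.
Proof.
  assert (H : vadd x (vscal (-1) x) = vzero).
  { rewrite <- (vscal1 x) at 1. rewrite <- vscalDl, Rplus_opp_r. apply vscal0. }
  rewrite <- (vadd0 (vscal (-1) x)), <- (vaddN x), vaddA.
  rewrite (vaddC (vscal (-1) x) x), H, vaddC. apply vadd0.
Qed.

Lemma ip_addr x y z : ip z (vadd x y) = ip z x + ip z y.
Proof. rewrite !(ip_sym z). apply ip_addl. Qed.

Lemma ip_scalr a x y : ip y (vscal a x) = a * ip y x.
Proof. rewrite !(ip_sym y). apply ip_scall. Qed.

Lemma ip_lincombl a x b y z : ip (lincomb a x b y) z = a * ip x z + b * ip y z.
Proof. unfold lincomb. rewrite ip_addl, !ip_scall. reflexivity. Qed.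

Lemma ip_lincombr a x b y z : ip z (lincomb a x b y) = a * ip z x + b * ip z y.
Proof. unfold lincomb. rewrite ip_addr, !ip_scalr. reflexivity. Qed.

Lemma lincomb10 x y : lincomb 1 x 0 y = x.
Proof. unfold lincomb. rewrite vscal1, vscal0. apply vadd0. Qed.

Lemma lincomb01 x y : lincomb 0 x 1 y = y.
Proof. unfold lincomb. rewrite vscal1, vscal0, vaddC. apply vadd0. Qed.

Lemma vsub_lincomb x y : vadd x (vopp y) = lincomb 1 x (-1) y.
Proof. unfold lincomb. rewrite vscal1, vscalN1. reflexivity. Qed.

Lemma ip_self_vsub x y :
  ip (vadd x (vopp y)) (vadd x (vopp y)) = ip x x - 2 * ip x y + ip y y.
Proof. rewrite vsub_lincomb, ip_lincombl, !ip_lincombr, (ip_sym y x). ring. Qed.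

Lemma eq_of_ip_self_vsub x y : ip x x - 2 * ip x y + ip y y = 0 -> x = y.
Proof.
  rewrite <- ip_self_vsub. intros H%ip_self_eq0.
  rewrite <- (vadd0 x), <- (vaddN y), (vaddC y), vaddA, H, vaddC. apply vadd0.
Qed.

Lemma cauchy_schwarz u v : (ip u v) ^ 2 <= ip u u * ip v v.
Proof.
  pose proof (ip_self_ge0 u). pose proof (ip_self_ge0 v).
  destruct (Req_dec (ip v v) 0) as [Hv0 | Hv0].
  - apply ip_self_eq0 in Hv0. subst v.
    rewrite <- (vscal0 u), ip_scalr, ip_scall. nra.
  - set (t := ip u v / ip v v).
    pose proof (ip_self_ge0 (lincomb 1 u (- t) v)) as Hproj.
    rewrite ip_lincombl, !ip_lincombr, (ip_sym v u) in Hproj.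
    replace (1 * (1 * ip u u + - t * ip u v) + - t * (1 * ip u v + - t * ip v v))
      with (ip u u - (ip u v) ^ 2 / ip v v) in Hproj by (unfold t; field; lra).
    apply Rmult_le_reg_r with (/ ip v v); [apply Rinv_0_lt_compat; lra|].
    rewrite Rmult_assoc, Rinv_r by lra. unfold Rdiv in Hproj. lra.
Qed.

Lemma ip_unit_sq_le v w : unit_vec v -> (ip v w) ^ 2 <= ip w w.
Proof. intros Hv. pose proof (cauchy_schwarz v w). unfold unit_sphere in Hv. nra. Qed.

Lemma ip_unit_bound x y : unit_vec x -> unit_vec y -> -1 <= ip x y <= 1.
Proof. intros Hx Hy. pose proof (ip_unit_sq_le x y Hx). unfold unit_sphere in Hy. nra. Qed.

Lemma eq_lincomb_of_ip x y z a b :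
  unit_vec x -> unit_vec y -> unit_vec z ->
  ip z x = a + b * ip x y -> ip z y = a * ip x y + b ->
  a * (a + b * ip x y) + b * (a * ip x y + b) = 1 ->
  z = lincomb a x b y.
Proof.
  unfold unit_sphere. intros Hx Hy Hz H1 H2 H3.
  apply eq_of_ip_self_vsub.
  rewrite !ip_lincombr, !ip_lincombl, H1, H2, Hz, Hx, Hy, (ip_sym y x).
  rewrite (ip_sym x y) in *. nra.
Qed.

End InnerSpaceAlgebra.
Lemma cos_le_iff a b : 0 <= a <= PI -> 0 <= b <= PI -> cos a <= cos b <-> b <= a.
Proof.
  intros Ha Hb. split; intros H.
  - destruct (Rle_dec b a) as [|Hn]; auto.
    assert (cos b < cos a) by (apply cos_decreasing_1; lra). lra.
  - destruct (Req_dec a b) as [-> | Hne]; [lra|].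
    left. apply cos_decreasing_1; lra.
Qed.

Lemma cos_lt_iff a b : 0 <= a <= PI -> 0 <= b <= PI -> cos a < cos b <-> b < a.
Proof.
  intros Ha Hb. pose proof (cos_le_iff b a Hb Ha).
  split; intros H'; destruct (Rle_dec a b); try tauto; lra.
Qed.

Lemma acos_le_iff u t : -1 <= u <= 1 -> 0 <= t <= PI -> acos u <= t <-> cos t <= u.
Proof.
  intros Hu Ht. rewrite <- (cos_acos u Hu) at 2.
  symmetry. apply cos_le_iff; [exact Ht | apply acos_bound].
Qed.

Lemma acos_lt_iff u t : -1 <= u <= 1 -> 0 <= t <= PI -> acos u < t <-> cos t < u.
Proof.
  intros Hu Ht. rewrite <- (cos_acos u Hu) at 2.
  symmetry. apply cos_lt_iff; [exact Ht | apply acos_bound].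
Qed.

Lemma sin_sq t : sin t ^ 2 = 1 - cos t ^ 2.
Proof. pose proof (sin2_cos2 t). unfold Rsqr in *. lra. Qed.

Section SphericalDistance.

Variable E : InnerSpace.
Implicit Types x y z : E.
Local Notation unit_vec := (unit_sphere (@ip E)).
Local Notation dist := (sph_dist (@ip E)).

Lemma sph_dist_bound x y : 0 <= dist x y <= PI.
Proof. apply acos_bound. Qed.

Lemma sph_dist_sym x y : dist x y = dist y x.
Proof. unfold sph_dist. rewrite ip_sym. reflexivity. Qed.

Lemma cos_sph_dist x y : unit_vec x -> unit_vec y -> cos (dist x y) = ip x y.
Proof. intros Hx Hy. apply cos_acos, ip_unit_bound; assumption. Qed.

Lemma sph_dist_le_iff x y t : unit_vec x -> unit_vec y -> 0 <= t <= PI ->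
  dist x y <= t <-> cos t <= ip x y.
Proof. intros Hx Hy Ht. apply acos_le_iff; [apply ip_unit_bound|]; assumption. Qed.

Lemma sph_dist_lt_iff x y t : unit_vec x -> unit_vec y -> 0 <= t <= PI ->
  dist x y < t <-> cos t < ip x y.
Proof. intros Hx Hy Ht. apply acos_lt_iff; [apply ip_unit_bound|]; assumption. Qed.

Lemma sph_dist_eq_iff x y t : unit_vec x -> unit_vec y -> 0 <= t <= PI ->
  dist x y = t <-> ip x y = cos t.
Proof.
  intros Hx Hy Ht. split; intros H.
  - rewrite <- H. symmetry. apply cos_sph_dist; assumption.
  - unfold sph_dist. rewrite H. apply acos_cos; assumption.
Qed.

Lemma sph_dist_self x : unit_vec x -> dist x x = 0.
Proof. intros Hx. unfold sph_dist. rewrite Hx. apply acos_1. Qed.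

Lemma sph_dist_eq0 x y : unit_vec x -> unit_vec y -> dist x y = 0 -> x = y.
Proof.
  intros Hx Hy H. pose proof PI_RGT_0.
  apply sph_dist_eq_iff in H; [|assumption|assumption|lra].
  rewrite cos_0 in H. apply eq_of_ip_self_vsub.
  unfold unit_sphere in Hx, Hy. rewrite Hx, Hy, H. ring.
Qed.

(* Cauchy-Schwarz for the components of x and z orthogonal to y. *)
Lemma ip_tangent_sq_le x y z : unit_vec x -> unit_vec y -> unit_vec z ->
  (ip x z - ip x y * ip y z) ^ 2 <= (1 - ip x y ^ 2) * (1 - ip y z ^ 2).
Proof.
  unfold unit_sphere. intros Hx Hy Hz.
  pose proof (cauchy_schwarz E (lincomb 1 x (- ip x y) y) (lincomb 1 z (- ip y z) y)) as H.
  rewrite !ip_lincombl, !ip_lincombr in H.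
  rewrite ?(ip_sym E y x), ?(ip_sym E z y), ?(ip_sym E z x), Hx, Hy, Hz in H.
  nra.
Qed.

Lemma sph_dist_triangle x y z : unit_vec x -> unit_vec y -> unit_vec z ->
  dist x z <= dist x y + dist y z.
Proof.
  intros Hx Hy Hz.
  set (a := dist x y). set (b := dist y z).
  pose proof (sph_dist_bound x y). pose proof (sph_dist_bound y z).
  pose proof (sph_dist_bound x z).
  destruct (Rle_dec PI (a + b)); [unfold a, b in *; lra|].
  apply sph_dist_le_iff; [assumption | assumption | unfold a, b in *; lra |].
  assert (Ca : cos a = ip x y) by (apply cos_sph_dist; assumption).
  assert (Cb : cos b = ip y z) by (apply cos_sph_dist; assumption).
  assert (Sa : 0 <= sin a) by (apply sin_ge_0; unfold a in *; lra).
  assert (Sb : 0 <= sin b) by (apply sin_ge_0; unfold b in *; lra).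
  pose proof (ip_tangent_sq_le x y z Hx Hy Hz) as Ht.
  rewrite <- Ca, <- Cb, <- !sin_sq, <- Rpow_mult_distr, Ca, Cb in Ht.
  assert (0 <= sin a * sin b) by (apply Rmult_le_pos; assumption).
  rewrite cos_plus, Ca, Cb.
  nra.
Qed.

End SphericalDistance.

(* On a degenerate arc (L = 0) the interpolation is constantly the first endpoint. *)
Definition slerp_coef1 (L t : R) : R := if Req_EM_T L 0 then 1 else sin (L - t) / sin L.
Definition slerp_coef2 (L t : R) : R := if Req_EM_T L 0 then 0 else sin t / sin L.

Definition slerp {E : InnerSpace} (x y : E) (L t : R) : E :=
  lincomb (slerp_coef1 L t) x (slerp_coef2 L t) y.

Lemma slerp_coef_cos L s t : 0 <= s <= L -> 0 <= t <= L -> L < PI ->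
  slerp_coef1 L t * cos s + slerp_coef2 L t * cos (L - s) = cos (s - t).
Proof.
  intros Hs Ht HL. unfold slerp_coef1, slerp_coef2.
  destruct (Req_EM_T L 0) as [-> | HL0].
  - replace s with 0 by lra. replace t with 0 by lra.
    rewrite Rminus_0_r, cos_0. ring.
  - assert (0 < sin L) by (apply sin_gt_0; lra).
    rewrite !sin_minus, !cos_minus. pose proof (sin_sq L). pose proof (sin_sq t).
    apply Rmult_eq_reg_r with (sin L); [|lra]. field_simplify; [nra | lra].
Qed.

Lemma slerp_coef_ge0 L t : 0 <= t <= L -> L < PI ->
  0 <= slerp_coef1 L t /\ 0 <= slerp_coef2 L t.
Proof.
  intros Ht HL. unfold slerp_coef1, slerp_coef2.
  destruct (Req_EM_T L 0) as [_ | HL0]; [lra|].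
  assert (0 < sin L) by (apply sin_gt_0; lra).
  assert (0 <= sin (L - t)) by (apply sin_ge_0; lra).
  assert (0 <= sin t) by (apply sin_ge_0; lra).
  split; apply Rmult_le_pos; try (left; apply Rinv_0_lt_compat); lra.
Qed.

Lemma slerp_coef2_sin L t : 0 < L < PI -> slerp_coef2 L t * sin L = sin t.
Proof.
  intros HL. unfold slerp_coef2. destruct (Req_EM_T L 0); [lra|].
  assert (0 < sin L) by (apply sin_gt_0; lra). field. lra.
Qed.

Lemma slerp_coef_start L : 0 <= L < PI -> slerp_coef1 L 0 = 1 /\ slerp_coef2 L 0 = 0.
Proof.
  intros HL. unfold slerp_coef1, slerp_coef2. destruct (Req_EM_T L 0); [lra|].
  assert (0 < sin L) by (apply sin_gt_0; lra).
  rewrite sin_0, Rminus_0_r. split; field; lra.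
Qed.

Lemma slerp_coef_end L : 0 < L < PI -> slerp_coef1 L L = 0 /\ slerp_coef2 L L = 1.
Proof.
  intros HL. unfold slerp_coef1, slerp_coef2. destruct (Req_EM_T L 0); [lra|].
  assert (0 < sin L) by (apply sin_gt_0; lra).
  rewrite Rminus_diag, sin_0. split; field; lra.
Qed.

Section Slerp.

Variable E : InnerSpace.
Local Notation unit_vec := (unit_sphere (@ip E)).
Local Notation dist := (sph_dist (@ip E)).

Variables (x y : E) (L : R).
Hypotheses (Hx : unit_vec x) (Hy : unit_vec y) (HL : 0 <= L < PI) (Hxy : ip x y = cos L).

Lemma ip_slerp_l t : 0 <= t <= L -> ip (slerp x y L t) x = cos t.
Proof.
  intros Ht. unfold slerp. rewrite ip_lincombl, (ip_sym E y x), Hxy, Hx.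
  pose proof (slerp_coef_cos L 0 t) as C0.
  rewrite Rminus_0_r, Rminus_0_l, cos_neg, cos_0 in C0. rewrite <- C0 by lra. ring.
Qed.

Lemma ip_slerp_r t : 0 <= t <= L -> ip (slerp x y L t) y = cos (L - t).
Proof.
  intros Ht. unfold slerp. rewrite ip_lincombl, Hxy, Hy.
  pose proof (slerp_coef_cos L L t) as CL.
  rewrite Rminus_diag, cos_0 in CL. rewrite <- CL by lra. ring.
Qed.

Lemma ip_slerp s t : 0 <= s <= L -> 0 <= t <= L ->
  ip (slerp x y L s) (slerp x y L t) = cos (s - t).
Proof.
  intros Hs Ht. unfold slerp at 2. rewrite ip_lincombr, ip_slerp_l, ip_slerp_r by lra.
  apply slerp_coef_cos; lra.
Qed.

Lemma slerp_unit t : 0 <= t <= L -> unit_vec (slerp x y L t).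
Proof. intros Ht. unfold unit_sphere. rewrite ip_slerp, Rminus_diag by lra. apply cos_0. Qed.

Lemma sph_dist_slerp s t : 0 <= s <= L -> 0 <= t <= L ->
  dist (slerp x y L s) (slerp x y L t) = Rabs (s - t).
Proof.
  intros Hs Ht. unfold sph_dist. rewrite ip_slerp by lra.
  unfold Rabs. destruct (Rcase_abs (s - t)).
  - rewrite <- cos_neg. apply acos_cos. lra.
  - apply acos_cos. lra.
Qed.

Lemma slerp_start : slerp x y L 0 = x.
Proof. unfold slerp. destruct (slerp_coef_start L HL) as [-> ->]. apply lincomb10. Qed.

Lemma slerp_end : slerp x y L L = y.
Proof.
  destruct (Req_dec L 0) as [HL0 | HL0].
  - replace (slerp x y L L) with (slerp x y L 0) by (rewrite HL0; reflexivity).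
    rewrite slerp_start. apply eq_of_ip_self_vsub.
    unfold unit_sphere in Hx, Hy. rewrite Hx, Hy, Hxy, HL0, cos_0. ring.
  - unfold slerp. destruct (slerp_coef_end L) as [-> ->]; [lra|]. apply lincomb01.
Qed.

Lemma eq_slerp z s : unit_vec z -> 0 <= s <= L ->
  ip x z = cos s -> ip z y = cos (L - s) -> z = slerp x y L s.
Proof.
  intros Hz Hs H1 H2.
  pose proof (slerp_coef_cos L 0 s ltac:(lra) Hs ltac:(lra)) as C0.
  pose proof (slerp_coef_cos L L s ltac:(lra) Hs ltac:(lra)) as CL.
  pose proof (slerp_coef_cos L s s Hs Hs ltac:(lra)) as Cs.
  rewrite Rminus_0_r, Rminus_0_l, cos_neg, cos_0, Rmult_1_r in C0.
  rewrite Rminus_diag, cos_0 in CL, Cs. rewrite Rmult_1_r in CL.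
  rewrite ip_sym in H1.
  apply eq_lincomb_of_ip; try assumption; rewrite Hxy, ?C0, ?CL; lra.
Qed.

End Slerp.

(* The cosine of the angle at p of the spherical triangle (p, x, y), from the law of cosines. *)
Definition apex_cos {E : InnerSpace} (p x y : E) : R :=
  (ip x y - ip p x * ip p y) / (sin (sph_dist (@ip E) p x) * sin (sph_dist (@ip E) p y)).

Section ApexAngle.

Variable E : InnerSpace.
Local Notation unit_vec := (unit_sphere (@ip E)).
Local Notation dist := (sph_dist (@ip E)).

Variables p x y : E.
Hypotheses (Hp : unit_vec p) (Hx : unit_vec x) (Hy : unit_vec y)
  (Hpx : 0 < dist p x < PI) (Hpy : 0 < dist p y < PI).

Lemma apex_cos_bound : -1 <= apex_cos p x y <= 1.
Proof.
  set (D1 := dist p x) in *. set (D2 := dist p y) in *.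
  assert (S1 : 0 < sin D1) by (apply sin_gt_0; lra).
  assert (S2 : 0 < sin D2) by (apply sin_gt_0; lra).
  pose proof (ip_tangent_sq_le E x p y Hx Hp Hy) as Ht.
  assert (C1 : ip p x = cos D1) by (symmetry; apply cos_sph_dist; assumption).
  assert (C2 : ip p y = cos D2) by (symmetry; apply cos_sph_dist; assumption).
  rewrite (ip_sym E x p), C1, C2, <- !sin_sq, <- Rpow_mult_distr in Ht.
  unfold apex_cos. fold D1 D2. rewrite C1, C2.
  assert (Hs : 0 < sin D1 * sin D2) by (apply Rmult_lt_0_compat; assumption).
  split.
  - apply Rmult_le_reg_r with (sin D1 * sin D2); [assumption|].
    unfold Rdiv. rewrite Rmult_assoc, Rinv_l by lra. nra.
  - apply Rmult_le_reg_r with (sin D1 * sin D2); [assumption|].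
    unfold Rdiv. rewrite Rmult_assoc, Rinv_l by lra. nra.
Qed.

(* Spherical law of cosines for points on the two arcs issuing from p. *)
Lemma ip_slerp_apex s t : 0 <= s <= dist p x -> 0 <= t <= dist p y ->
  ip (slerp p x (dist p x) s) (slerp p y (dist p y) t) =
  cos s * cos t + sin s * sin t * apex_cos p x y.
Proof.
  intros Hs Ht.
  set (D1 := dist p x) in *. set (D2 := dist p y) in *.
  assert (S1 : 0 < sin D1) by (apply sin_gt_0; lra).
  assert (S2 : 0 < sin D2) by (apply sin_gt_0; lra).
  assert (C1 : ip p x = cos D1) by (symmetry; apply cos_sph_dist; assumption).
  assert (C2 : ip p y = cos D2) by (symmetry; apply cos_sph_dist; assumption).
  pose proof (slerp_coef_cos D1 0 s ltac:(lra) Hs ltac:(lra)) as A1.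
  pose proof (slerp_coef_cos D2 0 t ltac:(lra) Ht ltac:(lra)) as A2.
  rewrite Rminus_0_r, Rminus_0_l, cos_neg, cos_0 in A1, A2.
  pose proof (slerp_coef2_sin D1 s ltac:(lra)) as B1.
  pose proof (slerp_coef2_sin D2 t ltac:(lra)) as B2.
  unfold apex_cos, slerp. fold D1 D2.
  rewrite ip_lincombl, !ip_lincombr, (ip_sym E x p), Hp, C1, C2.
  set (a1 := slerp_coef1 D1 s) in *. set (b1 := slerp_coef2 D1 s) in *.
  set (a2 := slerp_coef1 D2 t) in *. set (b2 := slerp_coef2 D2 t) in *.
  replace a1 with (cos s - b1 * cos D1) by lra.
  replace a2 with (cos t - b2 * cos D2) by lra.
  rewrite <- B1, <- B2. field. split; lra.
Qed.

End ApexAngle.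

Section SphericalBall.

Variable E : InnerSpace.
Local Notation unit_vec := (unit_sphere (@ip E)).
Local Notation dist := (sph_dist (@ip E)).
Local Notation ball := (sph_ball (@ip E)).

Variables (p : E) (r : R).
Hypothesis Hp : unit_vec p.

Lemma sph_ball_center : 0 <= r -> ball p r p.
Proof. intros Hr. split; [assumption|]. rewrite sph_dist_self; assumption. Qed.

Lemma cos_le_ip_of_sph_ball x : 0 <= r <= PI -> ball p r x -> cos r <= ip p x.
Proof. intros Hr [Hx Hd]. apply sph_dist_le_iff; assumption. Qed.

Lemma sph_dist_le_diam x y : ball p r x -> ball p r y -> dist x y <= 2 * r.
Proof.
  intros [Hx Dx] [Hy Dy].
  pose proof (sph_dist_triangle E x p y Hx Hp Hy). rewrite (sph_dist_sym E x p) in H. lra.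
Qed.

Lemma sph_ball_slerp x y t : r <= PI / 2 -> ball p r x -> ball p r y ->
  dist x y < PI -> 0 <= t <= dist x y -> ball p r (slerp x y (dist x y) t).
Proof.
  intros Hr Bx By HL Ht. pose proof PI_RGT_0.
  set (L := dist x y) in *.
  assert (Hr0 : 0 <= r) by (destruct Bx as [_ Dx]; pose proof (sph_dist_bound E p x); lra).
  pose proof (cos_le_ip_of_sph_ball x ltac:(lra) Bx) as Cx.
  pose proof (cos_le_ip_of_sph_ball y ltac:(lra) By) as Cy.
  destruct Bx as [Ux _], By as [Uy _].
  assert (Hk : ip x y = cos L) by (symmetry; apply cos_sph_dist; assumption).
  assert (HL0 : 0 <= L) by apply sph_dist_bound.
  split; [apply slerp_unit; auto; lra|].
  apply sph_dist_le_iff; [assumption | apply slerp_unit; auto; lra | lra |].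
  destruct (slerp_coef_ge0 L t Ht HL) as [Ha Hb].
  pose proof (slerp_coef_cos L t t Ht Ht HL) as Hsum.
  rewrite Rminus_diag, cos_0 in Hsum.
  assert (1 <= slerp_coef1 L t + slerp_coef2 L t).
  { pose proof (COS_bound t). pose proof (COS_bound (L - t)). nra. }
  pose proof (cos_ge_0 r ltac:(lra) ltac:(lra)).
  unfold slerp. rewrite ip_lincombr. nra.
Qed.

End SphericalBall.

Lemma ip_lincomb2 {E : InnerSpace} a (x : E) b y c u e v :
  ip (lincomb a x b y) (lincomb c u e v) =
  a * c * ip x u + a * e * ip x v + b * c * ip y u + b * e * ip y v.
Proof. rewrite ip_lincombl, !ip_lincombr. ring. Qed.

Lemma ip_eq_of_sph_dist_eq {E F : InnerSpace} (x x' : E) (y y' : F) :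
  unit_sphere ip x -> unit_sphere ip x' -> unit_sphere ip y -> unit_sphere ip y' ->
  sph_dist ip x x' = sph_dist ip y y' -> ip x x' = ip y y'.
Proof.
  intros Hx Hx' Hy Hy' H.
  rewrite <- (cos_sph_dist E x x'), <- (cos_sph_dist F y y'), H by assumption.
  reflexivity.
Qed.

Definition R3_add (u v : R3) : R3 :=
  let '(u1, u2, u3) := u in let '(v1, v2, v3) := v in (u1 + v1, u2 + v2, u3 + v3).
Definition R3_opp (u : R3) : R3 := let '(u1, u2, u3) := u in (- u1, - u2, - u3).
Definition R3_scal (a : R) (u : R3) : R3 := let '(u1, u2, u3) := u in (a * u1, a * u2, a * u3).

Lemma R3_vector_space : is_real_vector_space (0, 0, 0) R3_add R3_opp R3_scal.
Proof.
  repeat split; intros;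
    repeat match goal with u : (R * R * R)%type |- _ => destruct u as [[? ?] ?] end;
    simpl; try (apply (f_equal2 pair); [apply (f_equal2 pair)|]; ring).
Qed.

Lemma R3_inner_product : is_inner_product (0, 0, 0) R3_add R3_scal dot3.
Proof.
  repeat split; intros;
    repeat match goal with u : (R * R * R)%type |- _ => destruct u as [[? ?] ?] end;
    simpl in *; try ring; try nra.
  repeat f_equal; nra.
Qed.

Definition R3_space : InnerSpace :=
  Build_InnerSpace R3 (0, 0, 0) R3_add R3_opp R3_scal dot3 R3_vector_space R3_inner_product.

Section SphericalBallGeometry.

Variable E : InnerSpace.
Local Notation unit_vec := (unit_sphere (@ip E)).
Local Notation dist := (sph_dist (@ip E)).
Local Notation ball := (sph_ball (@ip E)).

Variables (p : E) (r : R).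
Hypothesis Hp : unit_vec p.

Lemma sph_ball_metric : is_metric_on (ball p r) dist.
Proof.
  split; [|split; [|split]].
  - intros x y _ _. apply sph_dist_bound.
  - intros x y [Hx _] [Hy _]. split.
    + apply sph_dist_eq0; assumption.
    + intros ->. apply sph_dist_self; assumption.
  - intros x y _ _. apply sph_dist_sym.
  - intros x y z [Hx _] [Hy _] [Hz _]. apply sph_dist_triangle; assumption.
Qed.

Lemma sph_ball_admissible : r < PI / 4 -> admissible (ball p r) dist.
Proof.
  intros Hr x y Bx By. pose proof (sph_dist_le_diam E p r Hp x y Bx By). lra.
Qed.

Lemma sph_ball_pi_geodesic : r <= PI / 2 -> pi_geodesic (ball p r) dist.
Proof.
  intros Hr x y Bx By HL.
  pose proof (sph_dist_bound E x y).
  destruct Bx as [Ux Dx] eqn:EBx. destruct By as [Uy Dy] eqn:EBy.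
  assert (Hk : ip x y = cos (dist x y)) by (symmetry; apply cos_sph_dist; assumption).
  exists (slerp x y (dist x y)). split; [|split; [|split]].
  - apply slerp_start; auto; lra.
  - apply slerp_end; auto; lra.
  - intros t Ht. apply sph_ball_slerp; auto.
  - intros s t Hs Ht. apply sph_dist_slerp; auto; lra.
Qed.

Lemma on_side_slerp xi xj g yi yj z z' :
  r < PI / 2 -> ball p r xi -> ball p r xj -> is_geodesic (ball p r) dist xi xj g ->
  S2 yi -> S2 yj -> dS2 yi yj = dist xi xj ->
  on_side dist xi xj g yi yj z z' ->
  exists s, z = slerp xi xj (dist xi xj) s /\ z' = @slerp R3_space yi yj (dist xi xj) s.
Proof.
  intros Hr Bi Bj [G0 [GL [Gin Gd]]] Si Sj Hd [s [Hs [Hz [Sz [C1 C2]]]]].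
  set (L := dist xi xj) in *.
  assert (HL : 0 <= L < PI).
  { pose proof (sph_dist_le_diam E p r Hp xi xj Bi Bj) as Hdiam.
    pose proof (sph_dist_bound E xi xj) as Hbound. fold L in Hdiam, Hbound. lra. }
  assert (Bz : ball p r z) by (rewrite Hz; apply Gin; lra).
  destruct Bi as [Ui _], Bj as [Uj _], Bz as [Uz _].
  assert (D1 : dist xi z = s).
  { rewrite <- G0, Hz, Gd by lra. rewrite Rabs_left1 by lra. ring. }
  assert (D2 : dist z xj = L - s).
  { rewrite <- GL at 1. rewrite Hz, Gd by lra. rewrite Rabs_left1 by lra. ring. }
  apply sph_dist_eq_iff in D1, D2; try assumption; try lra.
  change (sph_dist (@ip R3_space) yi z' = s) in C1.
  change (sph_dist (@ip R3_space) z' yj = L - s) in C2.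
  change (sph_dist (@ip R3_space) yi yj = L) in Hd.
  apply (sph_dist_eq_iff R3_space) in C1, C2, Hd; try assumption; try lra.
  exists s. split.
  - apply eq_slerp; auto. symmetry; apply cos_sph_dist; assumption.
  - apply (eq_slerp R3_space); auto.
Qed.

(* Both triangles span at most three dimensions, with the same Gram matrix of vertices,
   and corresponding points have the same coefficients; so the comparison is an equality. *)
Lemma sph_ball_CAT1 : r < PI / 2 -> CAT1_inequality (ball p r) dist.
Proof.
  intros Hr x1 x2 x3 g12 g23 g31 y1 y2 y3 X1 X2 X3 G12 G23 G31 _ S1 S2' S3 E12 E23 E31
    z w z' w' Tz Tw.
  pose (xs n := match n with 0%nat => x1 | 1%nat => x2 | _ => x3 end).
  pose (ys n := match n with 0%nat => y1 | 1%nat => y2 | _ => y3 end).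
  assert (Rep : forall u u', on_triangle dist x1 x2 x3 g12 g23 g31 y1 y2 y3 u u' ->
    exists i j a b, u = lincomb a (xs i) b (xs j) /\
      u' = @lincomb R3_space a (ys i) b (ys j)).
  { intros u u' [T | [T | T]].
    - destruct (on_side_slerp x1 x2 g12 y1 y2 u u' Hr X1 X2 G12 S1 S2' E12 T)
        as [s [-> ->]].
      exists 0%nat, 1%nat. do 2 eexists. split; reflexivity.
    - destruct (on_side_slerp x2 x3 g23 y2 y3 u u' Hr X2 X3 G23 S2' S3 E23 T)
        as [s [-> ->]].
      exists 1%nat, 2%nat. do 2 eexists. split; reflexivity.
    - destruct (on_side_slerp x3 x1 g31 y3 y1 u u' Hr X3 X1 G31 S3 S1 E31 T)
        as [s [-> ->]].
      exists 2%nat, 0%nat. do 2 eexists. split; reflexivity. }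
  assert (Gram : forall i j, ip (xs i) (xs j) = dot3 (ys i) (ys j)).
  { destruct X1 as [U1 _], X2 as [U2 _], X3 as [U3 _].
    assert (Edge : forall (x x' : E) y y', unit_vec x -> unit_vec x' -> S2 y -> S2 y' ->
      dS2 y y' = dist x x' -> ip x x' = dot3 y y' /\ ip x' x = dot3 y' y).
    { intros x x' y y' Hx Hx' Hy Hy' H.
      assert (H' : ip x x' = dot3 y y')
        by (apply (ip_eq_of_sph_dist_eq (F := R3_space)); auto).
      split; [exact H'|]. rewrite (ip_sym E x' x). exact (eq_trans H' (ip_sym R3_space y y')). }
    destruct (Edge x1 x2 y1 y2 U1 U2 S1 S2' E12).
    destruct (Edge x2 x3 y2 y3 U2 U3 S2' S3 E23).
    destruct (Edge x3 x1 y3 y1 U3 U1 S3 S1 E31).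
    unfold unit_sphere, S2 in *.
    intros [|[|i]] [|[|j]]; simpl; congruence. }
  destruct (Rep z z' Tz) as [i [j [a [b [-> ->]]]]].
  destruct (Rep w w' Tw) as [k [l [c [e [-> ->]]]]].
  unfold sph_dist, dS2. right. f_equal.
  rewrite ip_lincomb2. change dot3 with (@ip R3_space). rewrite ip_lincomb2.
  simpl. rewrite !Gram. reflexivity.
Qed.

End SphericalBallGeometry.

Lemma two_sub_two_cos_le_sq t : 0 <= t <= PI -> 2 - 2 * cos t <= t ^ 2.
Proof.
  intros Ht. replace t with (2 * (t / 2)) at 1 by field. rewrite cos_2a_sin.
  destruct (Req_dec t 0) as [-> | Ht0].
  - replace (0 / 2) with 0 by field. rewrite sin_0. lra.
  - assert (sin (t / 2) < t / 2) by (apply sin_lt_x; lra).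
    assert (0 <= sin (t / 2)) by (apply sin_ge_0; lra).
    nra.
Qed.

Section SphericalBallCompleteness.

Variable E : InnerSpace.
Local Notation unit_vec := (unit_sphere (@ip E)).
Local Notation dist := (sph_dist (@ip E)).
Local Notation ball := (sph_ball (@ip E)).
Local Notation ndist := (hnorm_dist (@vadd E) (@vopp E) (@ip E)).

Lemma hnorm_dist_sq x y : ndist x y ^ 2 = ip x x - 2 * ip x y + ip y y.
Proof.
  unfold hnorm_dist. rewrite <- Rsqr_pow2, Rsqr_sqrt by apply ip_self_ge0.
  apply ip_self_vsub.
Qed.

Lemma hnorm_dist_le_sph_dist x y : unit_vec x -> unit_vec y -> ndist x y <= dist x y.
Proof.
  intros Hx Hy. pose proof (sph_dist_bound E x y) as Hb.
  pose proof (two_sub_two_cos_le_sq (dist x y) Hb) as Hc.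
  rewrite cos_sph_dist in Hc by assumption.
  unfold hnorm_dist. rewrite ip_self_vsub, <- (sqrt_pow2 (dist x y)) by lra.
  apply sqrt_le_1_alt. unfold unit_sphere in Hx, Hy. lra.
Qed.

Lemma sph_dist_lt_of_hnorm_dist x y e : unit_vec x -> unit_vec y -> 0 <= e <= PI ->
  ndist x y ^ 2 < 2 - 2 * cos e -> dist x y < e.
Proof.
  intros Hx Hy He H. rewrite hnorm_dist_sq in H. unfold unit_sphere in Hx, Hy.
  apply sph_dist_lt_iff; auto. lra.
Qed.

Lemma sph_ball_closed p r l : unit_vec p -> 0 <= r <= PI ->
  (forall eps, 0 < eps -> exists x, ball p r x /\ ndist x l < eps) -> ball p r l.
Proof.
  intros Hp Hr Hl.
  assert (Approx : forall eps, 0 < eps -> - eps <= ip l l - 1 <= eps /\ cos r - eps <= ip p l).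
  { intros eps Heps.
    destruct (Hl (Rmin 1 (eps / 3))) as [x [Bx Hx]]; [apply Rmin_pos; lra|].
    pose proof (Rmin_l 1 (eps / 3)). pose proof (Rmin_r 1 (eps / 3)).
    pose proof (cos_le_ip_of_sph_ball E p r Hp x Hr Bx) as Cx.
    destruct Bx as [Ux _].
    (* with w := x - l, <l,l> = 1 - 2<x,w> + <w,w> and <p,l> = <p,x> - <p,w> *)
    set (w := vadd x (vopp l)) in *.
    assert (Hw : ip w w = ndist x l ^ 2)
      by (unfold hnorm_dist; rewrite <- Rsqr_pow2, Rsqr_sqrt by apply ip_self_ge0; reflexivity).
    assert (Hxw : ip x w = 1 - ip x l)
      by (unfold w; rewrite vsub_lincomb, ip_lincombr, Ux; ring).
    assert (Hpw : ip p w = ip p x - ip p l)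
      by (unfold w; rewrite vsub_lincomb, ip_lincombr; ring).
    pose proof (hnorm_dist_sq x l) as Hd. unfold unit_sphere in Ux. rewrite Ux in Hd.
    pose proof (ip_unit_sq_le E x w Ux) as Qx. pose proof (ip_unit_sq_le E p w Hp) as Qp.
    rewrite Hw in Qx, Qp. set (s := ndist x l) in *.
    assert (0 <= s) by apply sqrt_pos.
    assert (Bx : - s <= ip x w <= s) by (split; nra).
    assert (Bp : - s <= ip p w <= s) by (split; nra).
    assert (0 <= s ^ 2 <= s) by (split; nra).
    repeat split; lra. }
  assert (Ul : unit_vec l).
  { unfold unit_sphere. apply Rle_antisym; apply Rle_plus_epsilon; intros eps Heps;
      pose proof (Approx eps Heps); lra. }
  split; [exact Ul|].
  apply sph_dist_le_iff; [assumption | assumption | assumption |].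
  apply Rle_plus_epsilon. intros eps Heps. pose proof (Approx eps Heps). lra.
Qed.

Lemma sph_ball_complete p r : unit_vec p -> 0 <= r <= PI ->
  (forall u : nat -> E,
     (forall eps, eps > 0 -> exists N, forall m n, (m >= N)%nat -> (n >= N)%nat ->
        ndist (u m) (u n) < eps) ->
     exists l, forall eps, eps > 0 -> exists N, forall n, (n >= N)%nat ->
        ndist (u n) l < eps) ->
  complete_metric (ball p r) dist.
Proof.
  intros Hp Hr Hcomplete u Hu Hcauchy.
  destruct (Hcomplete u) as [l Hl].
  { intros eps Heps. destruct (Hcauchy eps Heps) as [N HN]. exists N. intros m n Hm Hn.
    destruct (Hu m) as [Um _], (Hu n) as [Un _].
    pose proof (hnorm_dist_le_sph_dist (u m) (u n) Um Un). specialize (HN m n Hm Hn). lra. }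
  assert (Bl : ball p r l).
  { apply sph_ball_closed; [assumption | assumption |]. intros eps Heps.
    destruct (Hl eps Heps) as [N HN]. exists (u N). split; [apply Hu | apply HN, Nat.le_refl]. }
  exists l. split; [exact Bl|].
  intros eps Heps. pose proof PI_RGT_0.
  set (e := Rmin eps PI).
  assert (He : 0 < e <= PI) by (split; [apply Rmin_pos | apply Rmin_r]; lra).
  assert (Hcos : cos e < 1) by (rewrite <- cos_0; apply cos_decreasing_1; lra).
  destruct (Hl (sqrt (2 - 2 * cos e))) as [N HN]; [apply sqrt_lt_R0; lra|].
  exists N. intros n Hn. specialize (HN n Hn).
  destruct (Hu n) as [Un _], Bl as [Ul _].
  apply Rlt_le_trans with e; [|apply Rmin_l].
  apply sph_dist_lt_of_hnorm_dist; [assumption | assumption | lra |].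
  assert (0 <= ndist (u n) l) by apply sqrt_pos.
  pose proof (sqrt_sqrt (2 - 2 * cos e) ltac:(lra)).
  nra.
Qed.

End SphericalBallCompleteness.

(* cos rho cos D + sin rho sin D c is the cosine of the third side of a spherical triangle
   with sides rho, D and angle cosine c between them; it decreases in D on [rho, pi/2 - rho]. *)
Lemma third_side_cos_bounds D rho c : 0 < rho < D -> D + rho < PI / 2 -> -1 <= c <= 1 ->
  0 < cos rho * cos D + sin rho * sin D * c <= cos rho ^ 2 + sin rho ^ 2 * c.
Proof.
  intros Hrho HD Hc. pose proof PI_RGT_0.
  assert (0 < sin rho) by (apply sin_gt_0; lra).
  assert (0 < sin D) by (apply sin_gt_0; lra).
  assert (Hplus : 0 < cos (D + rho)) by (apply cos_gt_0; lra).
  assert (Hminus : cos (D - rho) <= 1) by apply COS_bound.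
  assert (Hmono : cos (D + rho) <= cos (rho + rho)) by (left; apply cos_decreasing_1; lra).
  rewrite cos_plus in Hplus. rewrite 2!cos_plus in Hmono. rewrite cos_minus in Hminus.
  pose proof (sin_sq rho) as Hsin.
  split.
  - assert (0 <= sin rho * sin D * (c + 1)) by (apply Rmult_le_pos; [apply Rmult_le_pos|]; lra).
    nra.
  - (* the difference is a convex combination, with weights (1 + c)/2 and (1 - c)/2,
       of the slacks in Hminus and Hmono *)
    set (A := 1 - (cos D * cos rho + sin D * sin rho)).
    set (B := (cos rho ^ 2 - sin rho ^ 2) - (cos D * cos rho - sin D * sin rho)).
    assert (Heq : cos rho ^ 2 + sin rho ^ 2 * c - (cos rho * cos D + sin rho * sin D * c)
                  = ((1 + c) * A + (1 - c) * B) / 2) by (unfold A, B; rewrite Hsin; field).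
    assert (0 <= (1 + c) * A) by (apply Rmult_le_pos; unfold A; lra).
    assert (0 <= (1 - c) * B) by (apply Rmult_le_pos; unfold B; lra).
    lra.
Qed.

Lemma spherically_nonspreading_of_ip {E : InnerSpace} (X : E -> Prop) (T : E -> E) :
  (forall x, X x -> unit_sphere ip x) -> (forall x, X x -> X (T x)) ->
  (forall x y, X x -> X y -> ip (T x) (T y) ^ 2 >= ip (T x) y * ip (T y) x) ->
  spherically_nonspreading X (sph_dist ip) T.
Proof.
  intros HX HT H x y Hx Hy.
  rewrite !cos_sph_dist by auto. apply H; assumption.
Qed.

Section RadialRetraction.

Variable E : InnerSpace.
Local Notation unit_vec := (unit_sphere (@ip E)).
Local Notation dist := (sph_dist (@ip E)).
Local Notation ball := (sph_ball (@ip E)).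

Variables (p : E) (r c0 rho : R) (PA PB T : E -> E).
Hypotheses (Hp : unit_vec p) (Hrho : 0 < rho < c0) (Hr : r + rho < PI / 2)
  (Hcos : cos c0 <= cos rho ^ 2)
  (HPA : is_metric_projection (ball p r) (fun a => a = p) dist PA)
  (HPB : is_metric_projection (ball p r) (ball p rho) dist PB)
  (HT : forall x, ball p r x ->
          (ball p c0 x -> T x = PA x) /\ (~ ball p c0 x -> T x = PB x)).

Lemma T_inside x : ball p r x -> ball p c0 x -> T x = p.
Proof. intros Bx Cx. rewrite (proj1 (HT x Bx) Cx). apply HPA, Bx. Qed.

Lemma outside_dist x : unit_vec x -> ~ ball p c0 x -> c0 < dist p x.
Proof. intros Hx Cx. apply Rnot_le_lt. intros H. apply Cx. split; assumption. Qed.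

(* The nearest point of the small ball is where the arc from p to x leaves it:
   the triangle inequality through the projection is then an equality. *)
Lemma PB_outside x : ball p r x -> rho < dist p x -> PB x = slerp p x (dist p x) rho.
Proof.
  intros Bx HD. pose proof PI_RGT_0.
  set (D := dist p x) in *.
  assert (HDr : D <= r) by apply Bx.
  destruct Bx as [Ux Dx] eqn:EBx.
  assert (Hk : ip p x = cos D) by (symmetry; apply cos_sph_dist; assumption).
  assert (Hslerp : ball p rho (slerp p x D rho)).
  { split; [apply slerp_unit; auto; lra|].
    unfold sph_dist. rewrite ip_sym, ip_slerp_l, acos_cos; auto; lra. }
  destruct (HPB x Bx) as [[Uz Dz] Hmin].
  specialize (Hmin _ Hslerp). unfold sph_dist in Hmin at 2.
  rewrite (ip_sym E x), ip_slerp_r, acos_cos in Hmin by (auto; lra).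
  set (z := PB x) in *.
  pose proof (sph_dist_triangle E p z x Hp Uz Ux) as Htri. fold D in Htri.
  rewrite (sph_dist_sym E z x) in Htri.
  assert (E1 : dist p z = rho) by lra.
  assert (E2 : dist x z = D - rho) by lra.
  apply sph_dist_eq_iff in E1, E2; auto; try lra.
  apply eq_slerp; auto; try lra. rewrite ip_sym. assumption.
Qed.

Lemma T_outside x : ball p r x -> ~ ball p c0 x -> T x = slerp p x (dist p x) rho.
Proof.
  intros Bx Cx. rewrite (proj2 (HT x Bx) Cx). apply PB_outside; [assumption|].
  pose proof (outside_dist x (proj1 Bx) Cx). lra.
Qed.

Lemma T_outside_facts x : ball p r x -> ~ ball p c0 x ->
  unit_vec (T x) /\ ip p (T x) = cos rho /\ c0 < dist p x <= r.
Proof.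
  intros Bx Cx. pose proof PI_RGT_0.
  pose proof (outside_dist x (proj1 Bx) Cx). assert (dist p x <= r) by apply Bx.
  destruct Bx as [Ux _].
  assert (Hk : ip p x = cos (dist p x)) by (symmetry; apply cos_sph_dist; assumption).
  rewrite T_outside by (try split; assumption).
  split; [|split; [|lra]].
  - apply slerp_unit; auto; lra.
  - rewrite ip_sym. apply ip_slerp_l; auto; lra.
Qed.

Lemma T_maps_into x : ball p r x -> ball p r (T x).
Proof.
  intros Bx. destruct (classic (ball p c0 x)) as [Cx | Cx].
  - rewrite T_inside by assumption. apply sph_ball_center; [assumption|].
    destruct Bx as [_ Dx]. pose proof (sph_dist_bound E p x). lra.
  - destruct (T_outside_facts x Bx Cx) as [U [Hq Hd]].
    split; [assumption|]. unfold sph_dist. rewrite Hq, acos_cos; lra.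
Qed.

Lemma nonspreading_center_outside x y : ball p r x -> ball p r y -> ~ ball p c0 y ->
  ip p (T y) ^ 2 >= ip p y * ip (T y) x.
Proof.
  intros Bx By Cy. pose proof PI_RGT_0.
  destruct (T_outside_facts y By Cy) as [Uq [Hq Hd]].
  rewrite Hq.
  assert (Hc0 : ip p y < cos c0).
  { pose proof (sph_dist_bound E p y).
    destruct (Rlt_le_dec (ip p y) (cos c0)) as [|Hle]; [assumption|].
    apply sph_dist_le_iff in Hle; [lra | assumption | apply By | lra]. }
  assert (Hy0 : 0 <= ip p y).
  { pose proof (cos_le_ip_of_sph_ball E p r Hp y ltac:(lra) By).
    pose proof (cos_ge_0 r ltac:(lra) ltac:(lra)). lra. }
  pose proof (ip_unit_bound E (T y) x Uq (proj1 Bx)).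
  destruct (Rle_dec 0 (ip (T y) x)); nra.
Qed.

Lemma nonspreading_outside x y : ball p r x -> ball p r y -> ~ ball p c0 x -> ~ ball p c0 y ->
  ip (T x) (T y) ^ 2 >= ip (T x) y * ip (T y) x.
Proof.
  intros Bx By Cx Cy. pose proof PI_RGT_0.
  destruct (T_outside_facts x Bx Cx) as [_ [_ Dx]].
  destruct (T_outside_facts y By Cy) as [_ [_ Dy]].
  rewrite !T_outside by assumption.
  destruct Bx as [Ux _], By as [Uy _].
  pose proof (apex_cos_bound E p x y Hp Ux Uy ltac:(lra) ltac:(lra)) as Hc.
  assert (Ex : slerp p x (dist p x) (dist p x) = x)
    by (apply slerp_end; auto; [lra | symmetry; apply cos_sph_dist; auto]).
  assert (Ey : slerp p y (dist p y) (dist p y) = y)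
    by (apply slerp_end; auto; [lra | symmetry; apply cos_sph_dist; auto]).
  assert (Iqq : ip (slerp p x (dist p x) rho) (slerp p y (dist p y) rho)
                = cos rho ^ 2 + sin rho ^ 2 * apex_cos p x y)
    by (rewrite ip_slerp_apex by (auto; lra); ring).
  assert (Iqy : ip (slerp p x (dist p x) rho) y
                = cos rho * cos (dist p y) + sin rho * sin (dist p y) * apex_cos p x y)
    by (rewrite <- Ey at 1; rewrite ip_slerp_apex by (auto; lra); reflexivity).
  assert (Iqx : ip (slerp p y (dist p y) rho) x
                = cos rho * cos (dist p x) + sin rho * sin (dist p x) * apex_cos p x y)
    by (rewrite ip_sym, <- Ex at 1; rewrite ip_slerp_apex by (auto; lra); ring).
  rewrite Iqq, Iqy, Iqx.
  set (D1 := dist p x) in *. set (D2 := dist p y) in *.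
  set (c := apex_cos p x y) in *.
  destruct (third_side_cos_bounds D1 rho c) as [P1 L1]; try lra.
  destruct (third_side_cos_bounds D2 rho c) as [P2 L2]; try lra.
  nra.
Qed.

Lemma radial_retraction_nonspreading : spherically_nonspreading (ball p r) dist T.
Proof.
  apply spherically_nonspreading_of_ip; [intros x Bx; apply Bx | exact T_maps_into |].
  intros x y Bx By.
  destruct (classic (ball p c0 x)) as [Cx | Cx], (classic (ball p c0 y)) as [Cy | Cy].
  - rewrite !T_inside by assumption. rewrite Hp.
    pose proof (ip_unit_bound E p x Hp (proj1 Bx)).
    pose proof (ip_unit_bound E p y Hp (proj1 By)). nra.
  - rewrite (T_inside x) by assumption. apply nonspreading_center_outside; assumption.
  - rewrite (T_inside y), (ip_sym E (T x) p), (Rmult_comm (ip (T x) y)) by assumption.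
    apply nonspreading_center_outside; assumption.
  - apply nonspreading_outside; assumption.
Qed.

End RadialRetraction.

Theorem mainTheorem2
  (V : Type) (zero : V) (add : V -> V -> V) (opp : V -> V)
  (scal : R -> V -> V) (inner : V -> V -> R)
  (HH : is_real_hilbert_space zero add opp scal inner)
  (r delta : R)
  (Hr : PI / 8 < r < PI / 4)
  (Hdelta : 0 < delta < 1)
  (Hcos : cos (PI / 8) <= (cos (delta * PI / 8))^2)
  (p : V) (Hp : unit_sphere inner p)
  (PA PB T : V -> V)
  (HPA : is_metric_projection (sph_ball inner p r) (fun a => a = p)
           (sph_dist inner) PA)
  (HPB : is_metric_projection (sph_ball inner p r)
           (sph_ball inner p (delta * PI / 8)) (sph_dist inner) PB)
  (HT : forall x, sph_ball inner p r x ->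
          (sph_ball inner p (PI / 8) x -> T x = PA x) /\
          (~ sph_ball inner p (PI / 8) x -> T x = PB x)) :
  let X := sph_ball inner p r in
  let d := sph_dist inner in
  admissible X d /\ complete_metric X d /\ is_CAT1_space X d /\
  (forall x, X x -> X (T x)) /\
  spherically_nonspreading X d T.
Proof.
  intros X d.
  destruct HH as [Hvs [Hip Hcomplete]].
  set (H := Build_InnerSpace V zero add opp scal inner Hvs Hip).
  pose proof PI_RGT_0.
  assert (Hrho : 0 < delta * PI / 8 < PI / 8).
  { split; nra. }
  split; [|split; [|split; [|split]]].
  - exact (sph_ball_admissible H p r Hp ltac:(lra)).
  - exact (sph_ball_complete H p r Hp ltac:(lra) Hcomplete).
  - split; [|split].
    + exact (sph_ball_metric H p r).
    + exact (sph_ball_pi_geodesic H p r Hp ltac:(lra)).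
    + exact (sph_ball_CAT1 H p r Hp ltac:(lra)).
  - exact (T_maps_into H p r (PI / 8) (delta * PI / 8) PA PB T Hp Hrho ltac:(lra) HPA HPB HT).
  - exact (radial_retraction_nonspreading H p r (PI / 8) (delta * PI / 8) PA PB T
             Hp Hrho ltac:(lra) Hcos HPA HPB HT).
Qed.
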